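(* Let $M$ be a model of a complete affine theory which has an elementary substructure $K\preccurlyeq M$ whose underlying metric space is compact. Let $D_1\subseteq D_2\subseteq\cdots$ be definable subsets of $M^n$. Then $D=\overline{\bigcup_nD_n}$ is definable.
   Context: Affine continuous logic: $L$-structures are complete metric spaces $(M,d)$ with $d\le1$ and Lipschitz interpretations of function symbols and $[0,1]$-valued relation symbols. Affine formulas are built from $1$ and atomic formulas (including $d$) using only $r\cdot\phi$ ($r\in\mathbb R$), $\phi+\psi$, $\inf_x$, $\sup_x$; $K\preccurlyeq M$ means every affine formula with parameters from $K$ has the same value in $K$ and $M$. A predicate $P:M^n\to\mathbb R$ is definable (without parameters) if it is a uniform limit on $M^n$ of $\phi_k^M$ for affine formulas $\phi_k$. A closed $D\subseteq M^n$ is definable if $\bar x\mapsto d(\bar x,D)=\inf_{\bar a\in D}d(\bar x,\bar a)$ is definable. $\overline{X}$ denotes topological closure. *)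

From Stdlib Require Import Reals.
From Coquelicot Require Import Rbar Lub.
From mathcomp Require Import ssreflect ssrfun ssrbool eqtype ssrnat seq fintype bigop.

Set Implicit Arguments.
Unset Strict Implicit.
Unset Printing Implicit Defensive.

Local Open Scope R_scope.

Record language := Language {
  fsym : Type;
  farity : fsym -> nat;
  rsym : Type;
  rarity : rsym -> nat }.

Section Syntax.
Variable L : language.

Inductive term : Type :=
  | Var : nat -> term
  | App : forall f : fsym L, ('I_(farity f) -> term) -> term.

Inductive formula : Type :=
  | FOne : formula
  | FRel : forall r : rsym L, ('I_(rarity r) -> term) -> formula
  | FDist : term -> term -> formula
  | FScale : R -> formula -> formula
  | FAdd : formula -> formula -> formula
  | FInf : nat -> formula -> formula
  | FSup : nat -> formula -> formula.

Fixpoint fv_term (t : term) : seq nat :=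
  match t with
  | Var i => [:: i]
  | App f args => \big[cat/[::]]_(j < farity f) fv_term (args j)
  end.

Fixpoint fv (phi : formula) : seq nat :=
  match phi with
  | FOne => [::]
  | FRel r args => \big[cat/[::]]_(j < rarity r) fv_term (args j)
  | FDist t1 t2 => fv_term t1 ++ fv_term t2
  | FScale _ p => fv p
  | FAdd p q => fv p ++ fv q
  | FInf x p => filter (fun y => y != x) (fv p)
  | FSup x p => filter (fun y => y != x) (fv p)
  end.

Definition fv_lt (n : nat) (phi : formula) : bool :=
  all (fun i => (i < n)%N) (fv phi).
End Syntax.

(** max metric on M^n ('I_n -> M); it is 0 for n = 0 *)
Definition tdist (M : Type) (d : M -> M -> R) (n : nat) (x y : 'I_n -> M) : R :=
  \big[Rmax/0]_(i < n) d (x i) (y i).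

Definition is_metric_le1 (M : Type) (d : M -> M -> R) : Prop :=
  (forall x, d x x = 0) /\
  (forall x y, d x y = 0 -> x = y) /\
  (forall x y, d x y = d y x) /\
  (forall x y z, d x z <= d x y + d y z) /\
  (forall x y, d x y <= 1).

Definition cvg_to (M : Type) (d : M -> M -> R) (u : nat -> M) (a : M) : Prop :=
  forall eps, 0 < eps -> exists N, forall k, (N <= k)%N -> d (u k) a < eps.

Definition cauchy (M : Type) (d : M -> M -> R) (u : nat -> M) : Prop :=
  forall eps, 0 < eps -> exists N, forall k l, (N <= k)%N -> (N <= l)%N -> d (u k) (u l) < eps.

Definition complete_metric (M : Type) (d : M -> M -> R) : Prop :=
  forall u, cauchy d u -> exists a, cvg_to d u a.

Definition compact_metric (M : Type) (d : M -> M -> R) : Prop :=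
  forall u : nat -> M, exists (s : nat -> nat) (a : M),
    (forall k, (s k < s k.+1)%N) /\ cvg_to d (fun k => u (s k)) a.

Record structure (L : language) := Structure {
  car :> Type;
  point : car;                       (* structures are nonempty *)
  mdist : car -> car -> R;
  finterp : forall f : fsym L, ('I_(farity f) -> car) -> car;
  rinterp : forall r : rsym L, ('I_(rarity r) -> car) -> R }.

Definition is_L_structure (L : language) (M : structure L) : Prop :=
  is_metric_le1 (@mdist L M) /\ complete_metric (@mdist L M) /\
  (forall f, exists C, forall a b : 'I_(farity f) -> M,
      mdist (finterp a) (finterp b) <= C * tdist (@mdist L M) a b) /\
  (forall r (a : 'I_(rarity r) -> M), 0 <= rinterp a <= 1) /\
  (forall r, exists C, forall a b : 'I_(rarity r) -> M,
      Rabs (rinterp a - rinterp b) <= C * tdist (@mdist L M) a b).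

Definition Rinf (S : R -> Prop) : R := real (Glb_Rbar S).
Definition Rsup (S : R -> Prop) : R := real (Lub_Rbar S).

Section Semantics.
Variables (L : language) (M : structure L).

Definition upd (v : nat -> M) (x : nat) (a : M) : nat -> M :=
  fun y => if y == x then a else v y.

Fixpoint eval_term (v : nat -> M) (t : term L) : M :=
  match t with
  | Var i => v i
  | App f args => finterp (fun j => eval_term v (args j))
  end.

Fixpoint eval (v : nat -> M) (phi : formula L) : R :=
  match phi with
  | FOne => 1
  | FRel r args => rinterp (fun j => eval_term v (args j))
  | FDist t1 t2 => mdist (eval_term v t1) (eval_term v t2)
  | FScale c p => c * eval v p
  | FAdd p q => eval v p + eval v q
  | FInf x p => Rinf (fun s => exists a : M, s = eval (upd v x a) p)
  | FSup x p => Rsup (fun s => exists a : M, s = eval (upd v x a) p)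
  end.

Definition tval (n : nat) (x : 'I_n -> M) : nat -> M :=
  fun i => match insub i with Some j => x j | None => point M end.

Definition evalt (n : nat) (phi : formula L) (x : 'I_n -> M) : R :=
  eval (tval x) phi.

(** definable predicate (without parameters) on M^n *)
Definition definable_pred (n : nat) (P : ('I_n -> M) -> R) : Prop :=
  exists phis : nat -> formula L,
    (forall k, fv_lt n (phis k)) /\
    forall eps, 0 < eps -> exists N, forall k, (N <= k)%N ->
      forall x, Rabs (evalt (phis k) x - P x) <= eps.

(** distance to a subset of M^n (max metric); the inf is taken together with 1
    (the diameter bound), so that it is the usual inf for nonempty D and the
    constant 1 for D empty *)
Definition dist_set (n : nat) (D : ('I_n -> M) -> Prop) (x : 'I_n -> M) : R :=
  Rinf (fun s => s = 1 \/ exists a, D a /\ s = tdist (@mdist L M) x a).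

Definition closed_set (n : nat) (D : ('I_n -> M) -> Prop) : Prop :=
  forall x, (forall eps, 0 < eps -> exists a, D a /\ tdist (@mdist L M) x a < eps) -> D x.

Definition closure (n : nat) (D : ('I_n -> M) -> Prop) : ('I_n -> M) -> Prop :=
  fun x => forall eps, 0 < eps -> exists a, D a /\ tdist (@mdist L M) x a < eps.

Definition definable_set (n : nat) (D : ('I_n -> M) -> Prop) : Prop :=
  closed_set D /\ definable_pred (dist_set D).
End Semantics.

(** elementary embedding K -> M: every affine formula with parameters from K
    (i.e. every formula under every valuation in K) has the same value in K and M;
    K ≼ M is identified with its image under such an embedding *)
Definition elementary (L : language) (K M : structure L) (iota : K -> M) : Prop :=
  forall (phi : formula L) (v : nat -> K), eval v phi = eval (fun i => iota (v i)) phi.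

From Pilot Require Import Defs.
From Stdlib Require Import Reals Lra.
From Stdlib Require Import FunctionalExtensionality PropExtensionality ClassicalEpsilon Classical.
From Coquelicot Require Import Rcomplements Rbar Lub.
From mathcomp Require Import ssreflect ssrfun ssrbool eqtype ssrnat seq fintype bigop.

Set Implicit Arguments.
Unset Strict Implicit.
Unset Printing Implicit Defensive.
Local Open Scope R_scope.

(* Write f_k for the distance to D_k and f for the distance to D. The f_k are
   1-Lipschitz, decrease with k and converge pointwise to f, so by Dini's theorem they
   converge uniformly on the compact K^n. As f_N - f_m is definable, the bound
   sup_{K^n} (f_N - f_m) <= sup_{K^n} (f_N - f) <= eps is, up to eps, the value of an
   affine sentence sup_x (phi_N - phi_m), and elementarity carries it from K to M.
   So (f_k) is uniformly Cauchy on M^n, hence converges uniformly to f there, and a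
   uniform limit of definable predicates is definable. *)

Lemma Rsup_ub (S : R -> Prop) B e : (forall s, S s -> s <= B) -> S e -> e <= Rsup S.
Proof.
move=> HB He; have [Hub Hl] := Lub_Rbar_correct S.
have H1 := Hub e He; have H2 := Hl (Rbar.Finite B) HB.
by rewrite /Rsup; move: H1 H2; case: (Lub_Rbar S).
Qed.

Lemma Rsup_le (S : R -> Prop) c e : S e -> (forall s, S s -> s <= c) -> Rsup S <= c.
Proof.
move=> He HB; have [Hub Hl] := Lub_Rbar_correct S.
have H1 := Hub e He; have H2 := Hl (Rbar.Finite c) HB.
by rewrite /Rsup; move: H1 H2; case: (Lub_Rbar S).
Qed.

Lemma Rinf_lb (S : R -> Prop) B e : (forall s, S s -> B <= s) -> S e -> Rinf S <= e.
Proof.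
move=> HB He; have [Hub Hl] := Glb_Rbar_correct S.
have H1 := Hub e He; have H2 := Hl (Rbar.Finite B) HB.
by rewrite /Rinf; move: H1 H2; case: (Glb_Rbar S).
Qed.

Lemma Rinf_ge (S : R -> Prop) c e : S e -> (forall s, S s -> c <= s) -> c <= Rinf S.
Proof.
move=> He HB; have [Hub Hl] := Glb_Rbar_correct S.
have H1 := Hub e He; have H2 := Hl (Rbar.Finite c) HB.
by rewrite /Rinf; move: H1 H2; case: (Glb_Rbar S).
Qed.

Lemma Rsup_abs_le (S : R -> Prop) c e :
  S e -> (forall s, S s -> Rabs s <= c) -> Rabs (Rsup S) <= c.
Proof.
move=> He Hc; have Hb s : S s -> - c <= s <= c by move/Hc/Rabs_le_between.
apply/Rabs_le_between; split.
- by apply: Rle_trans (proj1 (Hb e He)) _; apply: (@Rsup_ub _ c) => // s /Hb [].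
- by apply: (Rsup_le He) => s /Hb [].
Qed.

Lemma Rinf_abs_le (S : R -> Prop) c e :
  S e -> (forall s, S s -> Rabs s <= c) -> Rabs (Rinf S) <= c.
Proof.
move=> He Hc; have Hb s : S s -> - c <= s <= c by move/Hc/Rabs_le_between.
apply/Rabs_le_between; split.
- by apply: (Rinf_ge He) => s /Hb [].
- by apply: Rle_trans _ (proj2 (Hb e He)); apply: (@Rinf_lb _ (- c)) => // s /Hb [].
Qed.

Lemma Rmax_big_ub (I : eqType) (F : I -> R) (s : seq I) i :
  i \in s -> F i <= \big[Rmax/0]_(j <- s) F j.
Proof.
elim: s => // a s IH; rewrite in_cons big_cons => /orP [/eqP -> | /IH Hi].
- exact: Rmax_l.
- exact: Rle_trans Hi (Rmax_r _ _).
Qed.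

Section TupleDistance.
Variables (T : Type) (d : T -> T -> R) (n : nat).
Implicit Types x y z : 'I_n -> T.

Lemma tdist_le x y c : 0 <= c -> (forall i, d (x i) (y i) <= c) -> tdist d x y <= c.
Proof. by move=> Hc H; apply: (big_ind (fun r => r <= c)) => // a b; apply: Rmax_lub. Qed.

Lemma tdist_lt x y c : 0 < c -> (forall i, d (x i) (y i) < c) -> tdist d x y < c.
Proof. by move=> Hc H; apply: (big_ind (fun r => r < c)) => // a b; apply: Rmax_lub_lt. Qed.

Lemma tdist_coord x y i : d (x i) (y i) <= tdist d x y.
Proof. exact: (Rmax_big_ub (fun j => d (x j) (y j)) (mem_index_enum i)). Qed.

Lemma tdist_comp (T' : Type) (d' : T' -> T' -> R) (f : T -> T') x y :
  (forall a b, d' (f a) (f b) = d a b) -> tdist d' (f \o x) (f \o y) = tdist d x y.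
Proof. by move=> Hf; apply: eq_bigr => i _; apply: Hf. Qed.

Hypothesis Hd : is_metric_le1 d.

Lemma metric_ge0 a b : 0 <= d a b.
Proof. by case: Hd => [H0 [_ [Hs [Ht _]]]]; have := Ht a b a; rewrite H0 (Hs b a); lra. Qed.

Lemma tdist_ge0 x y : 0 <= tdist d x y.
Proof.
apply: (big_ind (fun r => 0 <= r)); [exact: Rle_refl | | by move=> i _; apply: metric_ge0].
by move=> a b Ha _; apply: Rle_trans Ha (Rmax_l a b).
Qed.

Lemma tdist_refl x : tdist d x x = 0.
Proof.
apply: Rle_antisym; last exact: tdist_ge0.
apply: tdist_le => [|i]; last case: Hd => [-> _]; exact: Rle_refl.
Qed.

Lemma tdist_sym x y : tdist d x y = tdist d y x.
Proof. by apply: eq_bigr => i _; case: Hd => [_ [_ [-> _]]]. Qed.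

Lemma tdist_triangle x y z : tdist d x z <= tdist d x y + tdist d y z.
Proof.
apply: tdist_le => [|i]; first by have := tdist_ge0 x y; have := tdist_ge0 y z; lra.
case: Hd => [_ [_ [_ [Ht _]]]]; apply: Rle_trans (Ht _ (y i) _) _.
exact: Rplus_le_compat (tdist_coord _ _ _) (tdist_coord _ _ _).
Qed.

End TupleDistance.


Section SequentialCompactness.
Variables (T : Type) (d : T -> T -> R).
Hypothesis Hcpt : compact_metric d.

Lemma incr_homo_leq (s : nat -> nat) :
  (forall k, (s k < s k.+1)%N) -> {homo s : k l / (k <= l)%N}.
Proof. by move=> Hs; apply: homo_leq leqnn leq_trans (fun k => ltnW (Hs k)). Qed.

Lemma incr_leq_id (s : nat -> nat) : (forall k, (s k < s k.+1)%N) -> forall k, (k <= s k)%N.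
Proof. by move=> Hs; elim=> // k IH; apply: leq_ltn_trans IH (Hs k). Qed.

Lemma compact_tuple_prefix n (u : nat -> 'I_n -> T) m : (m <= n)%N ->
  exists (s : nat -> nat) (a : 'I_n -> T), (forall k, (s k < s k.+1)%N) /\
    forall eps, 0 < eps -> exists N, forall k, (N <= k)%N ->
      forall i : 'I_n, (i < m)%N -> d (u (s k) i) (a i) < eps.
Proof.
elim: m => [_|m IH Hmn].
  by exists id, (u 0%N); split=> // eps _; exists 0%N.
have [s [a [Hs Ha]]] := IH (ltnW Hmn).
pose i0 := Ordinal Hmn.
have [s' [a0 [Hs' Ha0]]] := Hcpt (fun k => u (s k) i0).
exists (s \o s'), (fun i => if i == i0 then a0 else a i); split.
  by move=> k; apply: leq_trans (Hs _) (incr_homo_leq Hs (Hs' k)).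
move=> eps He; have [N1 HN1] := Ha eps He; have [N2 HN2] := Ha0 eps He.
exists (maxn N1 N2) => k Hk i Hi; case: eqP => [->|/eqP Hne].
  by apply: HN2; apply: leq_trans Hk; apply: leq_maxr.
apply: HN1; first exact: leq_trans (leq_trans (leq_maxl _ _) Hk) (incr_leq_id Hs' k).
by rewrite ltn_neqAle -ltnS Hi andbT; apply: contra Hne => /eqP E; apply/eqP/val_inj.
Qed.

Lemma compact_metric_tuple n : compact_metric (@tdist T d n).
Proof.
move=> u; have [s [a [Hs Ha]]] := compact_tuple_prefix u (leqnn n).
exists s, a; split=> // eps He; have [N HN] := Ha eps He.
by exists N => k Hk; apply: tdist_lt => // i; apply: HN.
Qed.

End SequentialCompactness.

Lemma mem_bigcat (I : finType) (F : I -> seq nat) (s : seq I) j x :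
  j \in s -> x \in F j -> x \in \big[cat/[::]]_(i <- s) F i.
Proof.
elim: s => // a s IH; rewrite in_cons big_cons mem_cat => /orP [/eqP -> -> // | Hj Hx].
by rewrite IH ?orbT.
Qed.

Section Evaluation.
Variables (L : language) (S : structure L).
Implicit Types (v w : nat -> S) (phi : formula L).

Lemma eval_term_ext v w (t : term L) :
  (forall i, i \in fv_term t -> v i = w i) -> eval_term v t = eval_term w t.
Proof.
move: t; fix IH 1 => t; case: t => [i | f args] H /=; first by apply: H; rewrite inE.
congr finterp; apply: functional_extensionality => j; apply: IH => i Hi.
exact/H/(mem_bigcat (mem_index_enum j) Hi).
Qed.

Lemma eval_ext phi v w : (forall i, i \in fv phi -> v i = w i) -> eval v phi = eval w phi.
Proof.
elim: phi v w => [|r args|t1 t2|c p IH|p IHp q IHq|x p IH|x p IH] v w H /=.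
- by [].
- congr rinterp; apply: functional_extensionality => j; apply: eval_term_ext => i Hi.
  exact/H/(mem_bigcat (mem_index_enum j) Hi).
- by rewrite (@eval_term_ext v w t1) ?(@eval_term_ext v w t2) // => i Hi;
    apply: H; rewrite /= mem_cat Hi ?orbT.
- by rewrite (IH v w).
- by rewrite (IHp v w) ?(IHq v w) // => i Hi; apply: H; rewrite /= mem_cat Hi ?orbT.
all: have E a : eval (upd v x a) p = eval (upd w x a) p.
all: try (apply: IH => i Hi; rewrite /upd; case: eqP => // /eqP Hix;
          by apply: H; rewrite /= mem_filter Hix).
all: by congr (_ _); apply: functional_extensionality => s;
  apply: propositional_extensionality; split=> -[a ->]; exists a; rewrite E.
Qed.

Lemma eval_fv_lt n phi v w :
  fv_lt n phi -> (forall i, (i < n)%N -> v i = w i) -> eval v phi = eval w phi.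
Proof. by move=> Hf H; apply: eval_ext => i Hi; apply/H/(allP Hf). Qed.

Lemma eval_evalt n phi v : fv_lt n phi -> eval v phi = evalt phi (fun i : 'I_n => v i).
Proof. by move=> Hf; apply: (eval_fv_lt Hf) => i Hi; rewrite /tval insubT. Qed.

Fixpoint supn (m : nat) phi : formula L :=
  if m is m'.+1 then FSup m' (supn m' phi) else phi.

Lemma supn_le phi B : (forall v, eval v phi <= B) -> forall m w, eval w (supn m phi) <= B.
Proof.
move=> HB; elim=> [|m IH] w //=.
by apply: (@Rsup_le _ _ _ (ex_intro _ (point S) erefl)) => s [a ->].
Qed.

(* The upper bound is needed since [Rsup] of a set unbounded above is 0. *)
Lemma le_supn phi B : (forall v, eval v phi <= B) ->
  forall m v w, (forall i, (m <= i)%N -> v i = w i) -> eval v phi <= eval w (supn m phi).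
Proof.
move=> HB; elim=> [|m IH] v w H /=.
  have -> : v = w by apply: functional_extensionality => i; apply: H.
  exact: Rle_refl.
apply: Rle_trans (IH v (upd w m (v m)) _) _.
  move=> i Hi; rewrite /upd; case: eqP => [-> //|/eqP Him].
  by apply: H; rewrite ltn_neqAle eq_sym Him.
apply: (@Rsup_ub _ B); last by exists (v m).
by move=> s [a ->]; apply: supn_le.
Qed.

Hypothesis HS : is_L_structure S.

Lemma eval_bounded phi : exists c, forall v, Rabs (eval v phi) <= c.
Proof.
case: HS => [Hd [_ [_ [Hr _]]]].
elim: phi => [|r args|t1 t2|c p [b IH]|p [b IHp] q [c IHq]|x p [b IH]|x p [b IH]].
- by exists 1 => v; rewrite Rabs_R1; apply: Rle_refl.
- by exists 1 => v /=; apply/Rabs_le_between; have := Hr r (fun j => eval_term v (args j)); lra.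
- exists 1 => v /=; apply/Rabs_le_between; have := metric_ge0 Hd (eval_term v t1) (eval_term v t2).
  by case: Hd => [_ [_ [_ [_ H1]]]]; have := H1 (eval_term v t1) (eval_term v t2); lra.
- exists (Rabs c * b) => v /=; rewrite Rabs_mult.
  exact: Rmult_le_compat_l (Rabs_pos c) (IH v).
- exists (b + c) => v /=; apply: Rle_trans (Rabs_triang _ _) _.
  exact: Rplus_le_compat.
- by exists b => v /=; apply: (Rinf_abs_le (ex_intro _ (point S) erefl)) => s [a ->].
- by exists b => v /=; apply: (Rsup_abs_le (ex_intro _ (point S) erefl)) => s [a ->].
Qed.

End Evaluation.

Section Elementary.
Variables (L : language) (M K : structure L) (iota : K -> M).
Hypothesis Helem : elementary iota.

Lemma elementary_dist a b : mdist (iota a) (iota b) = mdist a b.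
Proof. exact: esym (Helem (FDist (Var L 0) (Var L 1)) (fun i => if i == 0%N then a else b)). Qed.

Lemma elementary_evalt n phi (y : 'I_n -> K) : fv_lt n phi -> evalt phi (iota \o y) = evalt phi y.
Proof.
by move=> Hf; rewrite /evalt [RHS]Helem; apply: (eval_fv_lt Hf) => i Hi; rewrite /tval insubT.
Qed.

Hypothesis HM : is_L_structure M.

(* The bound over K is the sentence [supn n phi <= B], which elementarity carries to M. *)
Lemma elementary_evalt_ub n phi B : fv_lt n phi ->
  (forall y : 'I_n -> K, evalt phi y <= B) -> forall x : 'I_n -> M, evalt phi x <= B.
Proof.
move=> Hf HK x; pose w := fun _ : nat => point K.
have HsupK : eval w (supn n phi) <= B by apply: supn_le => v; rewrite (eval_evalt _ Hf).
have [c Hc] := eval_bounded HM phi.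
pose v := fun i => if (i < n)%N then tval x i else iota (w i).
have -> : evalt phi x = eval v phi by apply: (eval_fv_lt Hf) => i Hi; rewrite /v Hi.
apply: Rle_trans (le_supn (fun u => Rle_trans _ _ _ (Rle_abs _) (Hc u))
                          (m := n) (w := fun i => iota (w i)) _) _.
  by move=> i Hi; rewrite /v ltnNge Hi.
by rewrite -(Helem _ w).
Qed.

End Elementary.

Section DistanceToSet.
Variables (L : language) (M : structure L) (n : nat).
Hypothesis Hm : is_metric_le1 (@mdist L M).
Implicit Types (D E : ('I_n -> M) -> Prop) (x y a : 'I_n -> M).
Local Notation td := (tdist (@mdist L M)).

Lemma dist_set_le1 D x : dist_set D x <= 1.
Proof.
apply: (@Rinf_lb _ 0); last by left.
by move=> s [->|[a [_ ->]]]; [lra | apply: tdist_ge0].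
Qed.

Lemma dist_set_le D x a : D a -> dist_set D x <= td x a.
Proof.
move=> Ha; apply: (@Rinf_lb _ 0); last by right; exists a.
by move=> s [->|[b [_ ->]]]; [lra | apply: tdist_ge0].
Qed.

Lemma dist_set_ge D x c : c <= 1 -> (forall a, D a -> c <= td x a) -> c <= dist_set D x.
Proof.
move=> H1 H; apply: (@Rinf_ge _ _ 1); first by left.
by move=> s [->|[a [Ha ->]]]; last apply: H.
Qed.

Lemma dist_set_lip D x y : dist_set D x <= dist_set D y + td x y.
Proof.
suff : dist_set D x - td x y <= dist_set D y by lra.
apply: dist_set_ge => [|a Ha].
  by have := dist_set_le1 D x; have := tdist_ge0 Hm x y; lra.
by have := dist_set_le x Ha; have := tdist_triangle Hm x y a; lra.
Qed.

Lemma dist_set_antimono D E x : (forall a, D a -> E a) -> dist_set E x <= dist_set D x.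
Proof.
move=> H; apply: dist_set_ge => [|a Ha]; first exact: dist_set_le1.
exact: dist_set_le (H a Ha).
Qed.

(* Qualified because [Reals] also exports a [closed_set]. *)
Lemma closure_closed D : Defs.closed_set (closure D).
Proof.
move=> x Hx eps He; have [a [Ha Hxa]] := Hx (eps / 2) ltac:(lra).
have [b [Hb Hab]] := Ha (eps / 2) ltac:(lra).
by exists b; split=> //; have := tdist_triangle Hm x a b; lra.
Qed.

Lemma subset_closure D a : D a -> closure D a.
Proof. by move=> Ha eps He; exists a; rewrite tdist_refl. Qed.

End DistanceToSet.

Definition unif_cvg (T : Type) (F : nat -> T -> R) (f : T -> R) : Prop :=
  forall eps, 0 < eps -> exists N, forall k, (N <= k)%N -> forall x, Rabs (F k x - f x) <= eps.

Section DecreasingSequences.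
Variables (T : Type) (F : nat -> T -> R) (g : T -> R).
Hypotheses (Hdecr : forall k m x, (k <= m)%N -> F m x <= F k x)
           (Hlb : forall k x, g x <= F k x)
           (Hpt : forall x eps, 0 < eps -> exists k, F k x <= g x + eps).

Lemma unif_cvg_decr : (forall eps, 0 < eps -> exists N, forall x, F N x <= g x + eps) ->
  unif_cvg F g.
Proof.
move=> H eps He; have [N HN] := H eps He; exists N => k Hk x.
by apply/Rabs_le_between'; have := Hdecr x Hk; have := HN x; have := Hlb k x; lra.
Qed.

Lemma unif_cvg_decr_cauchy :
  (forall eps, 0 < eps -> exists N, forall m x, F N x <= F m x + eps) -> unif_cvg F g.
Proof.
move=> Hc; apply: unif_cvg_decr => eps He; have [N HN] := Hc (eps / 2) ltac:(lra).
by exists N => x; have [k Hk] := @Hpt x (eps / 2) ltac:(lra); have := HN k x; lra.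
Qed.

Lemma dini (d : T -> T -> R) : compact_metric d -> (forall x y, d x y = d y x) ->
  (forall k x y, F k x <= F k y + d x y) -> (forall x y, g x <= g y + d x y) ->
  unif_cvg F g.
Proof.
move=> Hcpt Hsym HFlip Hglip; apply: unif_cvg_decr => eps He; apply: NNPP => Hn.
have [Y HY] : exists Y : nat -> T, forall N, g (Y N) + eps < F N (Y N).
  apply: (choice (fun N x => g x + eps < F N x)) => N; apply: NNPP => HN; apply: Hn; exists N => x.
  by apply: Rnot_lt_le => Hx; apply: HN; exists x.
have [s [a [Hs Ha]]] := Hcpt Y.
have [K0 HK0] := @Hpt a (eps / 3) ltac:(lra).
have [N0 HN0] := Ha (eps / 3) ltac:(lra).
pose j := maxn K0 N0; have Hj : (K0 <= s j)%N.
  exact: leq_trans (leq_maxl _ _) (incr_leq_id Hs j).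
have := HY (s j); have := Hdecr (Y (s j)) Hj; have := HFlip K0 (Y (s j)) a.
have := Hglip a (Y (s j)); rewrite Hsym; have := HN0 j (leq_maxr _ _); lra.
Qed.

End DecreasingSequences.

Section Definability.
Variables (L : language) (M : structure L) (n : nat).
Implicit Types P Q : ('I_n -> M) -> R.

Lemma definable_pred_approx P eps : definable_pred P -> 0 < eps ->
  exists phi, fv_lt n phi /\ forall x, Rabs (evalt phi x - P x) <= eps.
Proof.
move=> [phis [Hfv Hcvg]] He; have [N HN] := Hcvg eps He.
by exists (phis N); split=> //; apply: HN.
Qed.

Lemma definable_predB P Q : definable_pred P -> definable_pred Q ->
  definable_pred (fun x => P x - Q x).
Proof.
move=> [phis [Hfp Hp]] [psis [Hfq Hq]].
exists (fun k => FAdd (phis k) (FScale (-1) (psis k))); split.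
  by move=> k; rewrite /fv_lt /= all_cat; apply/andP; split; [apply: Hfp | apply: Hfq].
move=> eps He; have [N1 HN1] := Hp (eps / 2) ltac:(lra); have [N2 HN2] := Hq (eps / 2) ltac:(lra).
exists (maxn N1 N2) => k Hk x; rewrite /evalt /=.
have /Rabs_le_between' := HN1 k (leq_trans (leq_maxl _ _) Hk) x.
have /Rabs_le_between' := HN2 k (leq_trans (leq_maxr _ _) Hk) x.
by rewrite /evalt => ? ?; apply/Rabs_le_between'; lra.
Qed.

Lemma definable_pred_unif_limit (P : nat -> ('I_n -> M) -> R) Q :
  (forall k, definable_pred (P k)) -> unif_cvg P Q -> definable_pred Q.
Proof.
move=> Hdef Hcvg.
have [phis Hphis] : exists phis : nat -> formula L, forall k, fv_lt n (phis k) /\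
    forall x, Rabs (evalt (phis k) x - P k x) <= / INR k.+1.
  apply: (choice (fun k phi => fv_lt n phi /\ forall x, Rabs (evalt phi x - P k x) <= / INR k.+1)).
  by move=> k; apply: definable_pred_approx (Hdef k) _; apply/Rinv_0_lt_compat/lt_0_INR/ltP.
exists phis; split=> [k|eps He]; first exact: (proj1 (Hphis k)).
have [N1 HN1] := Hcvg (eps / 2) ltac:(lra).
have [N2 [HN2 HN2p]] := archimed_cor1 (eps / 2) ltac:(lra).
exists (maxn N1 N2) => k Hk x.
have Hinv : / INR k.+1 <= / INR N2.
  apply: Rinv_le_contravar; first exact: lt_0_INR.
  by apply/le_INR/leP; apply: leq_trans (leq_maxr _ _) (leqW Hk).
have /Rabs_le_between' := proj2 (Hphis k) x.
have /Rabs_le_between' := HN1 k (leq_trans (leq_maxl _ _) Hk) x.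
by move=> ? ?; apply/Rabs_le_between'; lra.
Qed.

End Definability.

Lemma definable_pred_ub_transfer (L : language) (M K : structure L) (iota : K -> M)
  (HM : is_L_structure M) (Helem : elementary iota) n (P : ('I_n -> M) -> R) B :
  definable_pred P -> (forall y : 'I_n -> K, P (iota \o y) <= B) -> forall x, P x <= B.
Proof.
move=> HP HB x; apply: Rnot_lt_le => Hx.
pose eps := (P x - B) / 3.
have [phi [Hfv Hphi]] := definable_pred_approx HP (ltac:(rewrite /eps; lra) : 0 < eps).
have HK (y : 'I_n -> K) : evalt phi y <= B + eps.
  rewrite -(elementary_evalt Helem _ Hfv).
  by have /Rabs_le_between' := Hphi (iota \o y); have := HB y; lra.
have := elementary_evalt_ub Helem HM Hfv HK x.
by have /Rabs_le_between' := Hphi x; rewrite /eps; lra.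
Qed.

Section ClosureOfIncreasingUnion.
Variables (L : language) (M K : structure L) (iota : K -> M).
Hypotheses (HM : is_L_structure M) (Helem : elementary iota)
           (Hcpt : compact_metric (@mdist L K)).
Variables (n : nat) (Ds : nat -> ('I_n -> M) -> Prop).
Hypotheses (Hdef : forall k, definable_pred (dist_set (Ds k)))
           (Hincr : forall k x, Ds k x -> Ds k.+1 x).

Let Hm : is_metric_le1 (@mdist L M) := proj1 HM.
Let D := closure (fun x => exists k, Ds k x).

Lemma dist_Ds_decr k m x : (k <= m)%N -> dist_set (Ds m) x <= dist_set (Ds k) x.
Proof.
move=> Hkm; apply: (dist_set_antimono Hm).
apply: (@homo_leq _ Ds (fun A B => forall x, A x -> B x)) Hkm => //.
by move=> B A C HAB HBC y /HAB /HBC.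
Qed.

Lemma dist_closure_le k x : dist_set D x <= dist_set (Ds k) x.
Proof. by apply: (dist_set_antimono Hm) => a Ha; apply: (subset_closure Hm); exists k. Qed.

Lemma dist_closure_approx x eps : 0 < eps -> exists k, dist_set (Ds k) x <= dist_set D x + eps.
Proof.
move=> He; apply: NNPP => Hn.
have Hk k : dist_set D x + eps < dist_set (Ds k) x.
  by apply: Rnot_le_lt => H; apply: Hn; exists k.
suff : dist_set D x + eps / 2 <= dist_set D x by lra.
apply: dist_set_ge => [|a Ha].
  by have := dist_set_le1 Hm (Ds 0) x; have := Hk 0%N; lra.
have [b [[k Hb] Hab]] := Ha (eps / 2) ltac:(lra).
by have := dist_set_le Hm x Hb; have := tdist_triangle Hm x a b; have := Hk k; lra.
Qed.

Lemma dist_Ds_unif_cvg_on_K :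
  unif_cvg (fun k (y : 'I_n -> K) => dist_set (Ds k) (iota \o y)) (fun y => dist_set D (iota \o y)).
Proof.
have Hiso (y z : 'I_n -> K) : tdist (@mdist L M) (iota \o y) (iota \o z) = tdist (@mdist L K) y z.
  exact: tdist_comp (elementary_dist Helem).
apply: (dini _ _ _ (compact_metric_tuple (n := n) Hcpt)).
- by move=> k m y; apply: dist_Ds_decr.
- by move=> k y; apply: dist_closure_le.
- by move=> y eps; apply: dist_closure_approx.
- by move=> y z; rewrite -!Hiso tdist_sym.
- by move=> k y z; rewrite -Hiso; apply: dist_set_lip.
- by move=> y z; rewrite -Hiso; apply: dist_set_lip.
Qed.

Lemma dist_Ds_unif_cauchy eps : 0 < eps ->
  exists N, forall m x, dist_set (Ds N) x <= dist_set (Ds m) x + eps.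
Proof.
move=> He; have [N HN] := dist_Ds_unif_cvg_on_K He; exists N => m x.
suff : dist_set (Ds N) x - dist_set (Ds m) x <= eps by lra.
apply: (definable_pred_ub_transfer HM Helem (definable_predB (Hdef N) (Hdef m))) => y.
have /Rabs_le_between' := HN N (leqnn N) y; have := dist_closure_le m (iota \o y); lra.
Qed.

Lemma dist_Ds_unif_cvg : unif_cvg (fun k => dist_set (Ds k)) (dist_set D).
Proof.
apply: unif_cvg_decr_cauchy dist_Ds_unif_cauchy.
- by move=> k m x; apply: dist_Ds_decr.
- exact: dist_closure_le.
- exact: dist_closure_approx.
Qed.

End ClosureOfIncreasingUnion.

Theorem mainTheorem20 (L : language) (M K : structure L) (iota : K -> M)
  (HM : is_L_structure M) (HK : is_L_structure K)
  (Helem : elementary iota)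
  (Hcpt : compact_metric (@mdist L K))
  (n : nat) (Ds : nat -> ('I_n -> M) -> Prop)
  (Hdef : forall k, definable_set (Ds k))
  (Hincr : forall k x, Ds k x -> Ds k.+1 x) :
  definable_set (closure (fun x => exists k, Ds k x)).
Proof.
split; first exact: (closure_closed (proj1 HM)).
apply: definable_pred_unif_limit (fun k => proj2 (Hdef k)) _.
exact: (dist_Ds_unif_cvg HM Helem Hcpt (fun k => proj2 (Hdef k)) Hincr).
Qed.
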